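(* Let $n\ge4$ and let $\mathcal D_n$ be a minimal DFA with state set $Q_n=\{0,\dots,n-1\}$, initial state $0$ and unique final state $n-1$, recognizing a two-sided ideal, with transition semigroup $T_n$. If every chain of states of $\mathcal D_n$ strictly ordered by $\prec$ has at most $3$ elements (i.e., a maximal-length such chain has length $3$), then $|T_n|\le n^{n-2}+(n-2)2^{n-2}+1$ and $T_n$ is a subsemigroup of $S_n$.
   Context: A two-sided ideal is a nonempty $L$ with $L=\Sigma^*L\Sigma^*$. For a state $q$, $K_q$ is the language accepted from $q$; $p\prec q$ means $K_p\subsetneq K_q$. The transition semigroup is the set of state transformations induced by nonempty words. Notation: $(p\to q)$ maps $p$ to $q$ and fixes other states; $(p_0,\dots,p_{k-1})$ is a cyclic permutation fixing other states. $S_n$ is the transition semigroup of the DFA with states $Q_n$, initial $0$, final $\{n-1\}$, alphabet $\{a,b,c,d,e,f\}$, with $a\colon(1,2,\dots,n-2)$, $b\colon(1,2)$, $c\colon(n-2\to1)$, $d\colon(n-2\to0)$, $e$ mapping each state of $\{0,\dots,n-2\}$ to $1$ and fixing $n-1$, and $f\colon(1\to n-1)$. *)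

From mathcomp Require Import all_boot.
From mathcomp Require Import boolp.
Set Implicit Arguments. Unset Strict Implicit. Unset Printing Implicit Defensive.

(* A DFA over the finite alphabet Sigma with state set Q_n = 'I_n is given by
   its transition function delta; the initial state is the state with value 0
   and the unique final state is the state with value n-1. *)

Definition dw (Sigma : finType) (n : nat) (delta : Sigma -> 'I_n -> 'I_n)
  (q : 'I_n) (w : seq Sigma) : 'I_n :=
  foldl (fun p a => delta a p) q w.

Definition Kq (Sigma : finType) (n : nat) (delta : Sigma -> 'I_n -> 'I_n)
  (q : 'I_n) (w : seq Sigma) : Prop :=
  val (dw delta q w) = n.-1.

Definition dfa_lang (Sigma : finType) (n : nat) (delta : Sigma -> 'I_n -> 'I_n)
  (w : seq Sigma) : Prop :=
  exists q0 : 'I_n, val q0 = 0 /\ Kq delta q0 w.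

Definition two_sided_ideal (Sigma : finType) (L : seq Sigma -> Prop) : Prop :=
  (exists w, L w) /\
  forall w, L w <-> exists u x v, w = u ++ x ++ v /\ L x.

Definition minimal_dfa (Sigma : finType) (n : nat) (delta : Sigma -> 'I_n -> 'I_n) : Prop :=
  (forall q : 'I_n, exists (q0 : 'I_n) (w : seq Sigma), val q0 = 0 /\ dw delta q0 w = q) /\
  (forall p q : 'I_n, (forall w, Kq delta p w <-> Kq delta q w) -> p = q).

Definition prec (Sigma : finType) (n : nat) (delta : Sigma -> 'I_n -> 'I_n)
  (p q : 'I_n) : Prop :=
  (forall w, Kq delta p w -> Kq delta q w) /\ (exists w, Kq delta q w /\ ~ Kq delta p w).

(* s is a chain strictly ordered by prec (consecutive elements related;
   prec is transitive so this is a chain) *)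
Fixpoint prec_chain (Sigma : finType) (n : nat) (delta : Sigma -> 'I_n -> 'I_n)
  (s : seq 'I_n) : Prop :=
  match s with
  | x :: ((y :: _) as t) => prec delta x y /\ prec_chain delta t
  | _ => True
  end.

Definition trans_of (Sigma : finType) (n : nat) (delta : Sigma -> 'I_n -> 'I_n)
  (w : seq Sigma) : {ffun 'I_n -> 'I_n} :=
  [ffun q => dw delta q w].

Definition trans_semigroup (Sigma : finType) (n : nat) (delta : Sigma -> 'I_n -> 'I_n)
  : {set {ffun 'I_n -> 'I_n}} :=
  [set t | `[< exists w : seq Sigma, w <> [::] /\ t = trans_of delta w >]].

(* The DFA defining S_n, alphabet {a,b,c,d,e,f} = 'I_6 (a=0,...,f=5),
   first on nat then restricted to 'I_n *)
Definition Sn_nat (n : nat) (x : nat) (q : nat) : nat :=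
  match x with
  | 0 =>
      if (1 <= q) && (q <= n - 2) then (if q == n - 2 then 1 else q.+1) else q
  | 1 =>
      if q == 1 then 2 else if q == 2 then 1 else q
  | 2 =>
      if q == n - 2 then 1 else q
  | 3 =>
      if q == n - 2 then 0 else q
  | 4 =>
      if q == n - 1 then q else 1
  | _ =>
      if q == 1 then n - 1 else q
  end.

Definition Sn_delta (n : nat) (x : 'I_6) (q : 'I_n) : 'I_n :=
  insubd q (Sn_nat n (val x) (val q)).

Definition S_n (n : nat) : {set {ffun 'I_n -> 'I_n}} :=
  trans_semigroup (@Sn_delta n).

From mathcomp Require Import all_boot.
From mathcomp Require Import boolp zify.
Set Implicit Arguments. Unset Strict Implicit. Unset Printing Implicit Defensive.

(** In an ideal DFA every language K_q contains K_0 and K_{n-1} is everything;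
   a transformation t induced by w satisfies K_{t q} = w^{-1} K_q, so it fixes
   n-1 and K_{t 0} is contained in every K_{t q}.  A chain bound of 3 makes
   the states other than 0 and n-1 pairwise incomparable, hence if t 0 <> 0
   then every t q is t 0 or n-1.  There are n^(n-2) such maps fixing 0,
   (n-2) 2^(n-2) with t 0 in the middle and one constant map.  All of them lie
   in S_n: a and b generate the permutations of the middle states, conjugates
   of c, d, f redirect one middle state anywhere, which generates every map
   fixing 0 and n-1, and e reduces the remaining maps to that case. *)

Lemma dw_cat (Sigma : finType) n (delta : Sigma -> 'I_n -> 'I_n) q u v :
  dw delta q (u ++ v) = dw delta (dw delta q u) v.
Proof. by rewrite /dw foldl_cat. Qed.

Definition transp (x y q : nat) : nat := if q == x then y else if q == y then x else q.

Lemma transp_conj x y z q :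
  z != x -> z != y -> transp x y (transp z x (transp x y q)) = transp z y q.
Proof. by rewrite /transp => /eqP zx /eqP zy; repeat case: ifP; lia. Qed.

Definition redirect (p r q : nat) : nat := if q == p then r else q.

Section SnRealizable.

Variable n : nat.
Hypothesis n_ge4 : 4 <= n.

(* Maps are handled as functions on nat; only their values below n matter. *)
Definition Sn_realizable (F : nat -> nat) : Prop :=
  exists w : seq 'I_6, forall q : 'I_n, val (dw (@Sn_delta n) q w) = F q.

Lemma Sn_realizable_ext F G :
  Sn_realizable F -> (forall q, q < n -> F q = G q) -> Sn_realizable G.
Proof. by move=> [w Fw] FG; exists w => q; rewrite Fw FG. Qed.

Lemma Sn_realizable_id : Sn_realizable id.
Proof. by exists [::]. Qed.

Lemma Sn_realizable_comp F G :
  Sn_realizable F -> Sn_realizable G -> Sn_realizable (G \o F).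
Proof.
move=> [u Fu] [v Gv]; exists (u ++ v) => q.
by rewrite dw_cat Gv Fu.
Qed.

Lemma Sn_nat_lt k q : q < n -> Sn_nat n k q < n.
Proof. by rewrite /Sn_nat => lt_qn; case: k => [|[|[|[|[|k]]]]]; repeat case: ifP; lia. Qed.

Lemma val_Sn_delta (x : 'I_6) (q : 'I_n) : val (Sn_delta x q) = Sn_nat n x q.
Proof. by rewrite /Sn_delta val_insubd Sn_nat_lt ?ltn_ord. Qed.

Lemma Sn_realizable_letter k : k < 6 -> Sn_realizable (Sn_nat n k).
Proof. by move=> lt_k6; exists [:: Ordinal lt_k6] => q; rewrite val_Sn_delta. Qed.

(* The action of a^k. *)
Definition rot_mid (k q : nat) : nat :=
  if 0 < q <= n - 2 then (if q + k <= n - 2 then q + k else q + k - (n - 2)) else q.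

Lemma Sn_realizable_rot k : k <= n - 2 -> Sn_realizable (rot_mid k).
Proof.
elim: k => [|k IH] le_k.
  by apply: (Sn_realizable_ext Sn_realizable_id) => q _; rewrite /rot_mid; repeat case: ifP; lia.
apply: (Sn_realizable_ext (Sn_realizable_comp (IH (ltnW le_k)) (@Sn_realizable_letter 0 isT))).
by move=> q _ /=; rewrite /rot_mid /Sn_nat; repeat case: ifP; lia.
Qed.

Lemma Sn_realizable_transp_succ x : 0 < x < n - 2 -> Sn_realizable (transp x x.+1).
Proof.
move=> hx.
have rot_fwd := @Sn_realizable_rot (x - 1) (ltac:(lia)).
have rot_back := @Sn_realizable_rot (n - 2 - (x - 1)) (ltac:(lia)).
have b := @Sn_realizable_letter 1 isT.
apply: (Sn_realizable_ext (Sn_realizable_comp (Sn_realizable_comp rot_back b) rot_fwd)).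
by move=> q _ /=; rewrite /rot_mid /transp /Sn_nat; repeat case: ifP; lia.
Qed.

Lemma Sn_realizable_transp1 y : 0 < y <= n - 2 -> Sn_realizable (transp 1 y).
Proof.
elim: y => [//|y IH] hy.
have [->|y_gt0] := posnP y.
  by apply: (Sn_realizable_ext Sn_realizable_id) => q _; rewrite /transp; case: eqP.
have [->|y_neq1] := eqVneq y 1.
  by apply: (Sn_realizable_ext (@Sn_realizable_letter 1 isT)) => q _.
have s := @Sn_realizable_transp_succ y (ltac:(lia)).
apply: (Sn_realizable_ext (Sn_realizable_comp (Sn_realizable_comp s (IH (ltac:(lia)))) s)).
by move=> q _ /=; rewrite transp_conj //; lia.
Qed.

Lemma Sn_realizable_transp x y :
  0 < x <= n - 2 -> 0 < y <= n - 2 -> Sn_realizable (transp x y).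
Proof.
move=> hx hy; have [->|x_neq1] := eqVneq x 1; first exact: Sn_realizable_transp1.
have [->|x_neq_y] := eqVneq x y.
  by apply: (Sn_realizable_ext Sn_realizable_id) => q _; rewrite /transp; repeat case: eqP.
have sy := Sn_realizable_transp1 hy.
have sx : Sn_realizable (transp x 1).
  apply: (Sn_realizable_ext (Sn_realizable_transp1 hx)) => q _.
  by rewrite /transp; repeat case: ifP; lia.
apply: (Sn_realizable_ext (Sn_realizable_comp (Sn_realizable_comp sy sx) sy)).
by move=> q _ /=; rewrite transp_conj.
Qed.

Lemma Sn_realizable_redirect_last r : 0 < r <= n - 2 -> Sn_realizable (redirect (n - 2) r).
Proof.
move=> hr; have [->|r_last] := eqVneq r (n - 2).
  by apply: (Sn_realizable_ext Sn_realizable_id) => q _; rewrite /redirect; case: ifP; lia.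
have s := Sn_realizable_transp1 hr; have c := @Sn_realizable_letter 2 isT.
apply: (Sn_realizable_ext (Sn_realizable_comp (Sn_realizable_comp s c) s)).
by move=> q _ /=; rewrite /redirect /transp /Sn_nat; repeat case: ifP; lia.
Qed.

Lemma Sn_realizable_redirect p r : 0 < p <= n - 2 -> r < n -> Sn_realizable (redirect p r).
Proof.
move=> hp hr.
have by_conj s F G : 0 < s <= n - 2 -> Sn_realizable F ->
  (forall q, q < n -> transp p s (F (transp p s q)) = G q) -> Sn_realizable G.
  move=> hs FP; have sP := Sn_realizable_transp hp hs.
  exact: (Sn_realizable_ext (Sn_realizable_comp (Sn_realizable_comp sP FP) sP)).
have [->|r_gt0] := posnP r.
  apply: (by_conj (n - 2) (Sn_nat n 3)); [lia | exact: Sn_realizable_letter |].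
  by move=> q _; rewrite /transp /redirect /Sn_nat; repeat case: ifP; lia.
have [->|r_neq_last] := eqVneq r n.-1.
  apply: (by_conj 1 (Sn_nat n 5)); [lia | exact: Sn_realizable_letter |].
  by move=> q _; rewrite /transp /redirect /Sn_nat; repeat case: ifP; lia.
apply: (by_conj (n - 2) (redirect (n - 2) (transp p (n - 2) r))); first lia.
  by apply: Sn_realizable_redirect_last; rewrite /transp; repeat case: ifP; lia.
by move=> q _; rewrite /transp /redirect; repeat case: ifP; lia.
Qed.

Definition moved (F : nat -> nat) : {set 'I_n} := [set q : 'I_n | F q != q].

Lemma moved_proper (F G : nat -> nat) (p : 'I_n) :
  (forall q : 'I_n, F q = q -> G q = q) -> F p != p -> G p = p ->
  moved G \proper moved F.
Proof.
move=> fixFG pF pG; apply/properP; split; last by exists p; rewrite !inE ?pG ?eqxx.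
by apply/subsetP => q; rewrite !inE; apply: contraNN => /eqP /fixFG ->.
Qed.

Lemma mid_of_moved F q :
  F 0 = 0 -> F n.-1 = n.-1 -> q < n -> F q != q -> 0 < q <= n - 2.
Proof.
move=> F0 Flast lt_qn; have [->|_] := posnP q; first by rewrite F0 eqxx.
by have [->|/eqP] := eqVneq q n.-1; [rewrite Flast eqxx | lia].
Qed.

Lemma Sn_realizable_fix_ends F :
  F 0 = 0 -> F n.-1 = n.-1 -> (forall q, q < n -> F q < n) -> Sn_realizable F.
Proof.
(* Induction on the moved states: for a moved p with r := F p, redirect p to r
   if F fixes r, otherwise compose F with the transposition (p r). *)
have [k] := ubnP #|moved F|; elim: k F => // k IH F lt_Fk F0 Flast F_lt.
have IH' G : moved G \proper moved F -> G 0 = 0 -> G n.-1 = n.-1 ->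
    (forall q, q < n -> G q < n) -> Sn_realizable G.
  by move=> /proper_card ltGF; apply: IH; apply: leq_trans ltGF _.
have [M0|[p pF]] := set_0Vmem (moved F).
  apply: (Sn_realizable_ext Sn_realizable_id) => q lt_qn /=.
  have : Ordinal lt_qn \notin moved F by rewrite M0 inE.
  by rewrite inE negbK => /eqP.
rewrite inE in pF; set r := F p in pF.
have p_mid := mid_of_moved F0 Flast (ltn_ord p) pF.
have [Frr|Frr] := eqVneq (F r) r.
  pose G (q : nat) := if q == p then q else F q.
  have GP : Sn_realizable G.
    apply: IH'; rewrite /G ?F0 ?Flast; try by case: ifP.
      by apply: (moved_proper (p := p)) => [q Fq|//|]; rewrite ?eqxx //; case: ifP.
    by move=> q lt_qn; case: ifP => // _; apply: F_lt.
  have redirectP := Sn_realizable_redirect p_mid (F_lt p (ltn_ord p)).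
  apply: (Sn_realizable_ext (Sn_realizable_comp redirectP GP)).
  move=> q _ /=; rewrite /G /redirect.
  by case: (eqVneq q p) => [->|/negbTE ->] //; rewrite Frr; case: ifP.
have r_mid := mid_of_moved F0 Flast (F_lt p (ltn_ord p)) Frr.
have sP := Sn_realizable_transp p_mid r_mid.
have GP : Sn_realizable (transp p r \o F).
  apply: IH' => /=.
  - apply: (moved_proper (p := p)) => [q Fq /=|//|/=]; last by rewrite /transp eqxx; case: eqP.
    rewrite Fq /transp; case: (eqVneq (q : nat) p) => [qp|_].
      by move: pF; rewrite /r -qp Fq eqxx.
    by case: (eqVneq (q : nat) r) => [qr|//]; move: Frr; rewrite -qr Fq eqxx.
  - by rewrite F0 /transp; repeat case: ifP; lia.
  - by rewrite Flast /transp; repeat case: ifP; lia.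
  - by move=> q /F_lt; rewrite /transp; repeat case: ifP; lia.
apply: (Sn_realizable_ext (Sn_realizable_comp GP sP)) => q _ /=.
by rewrite /transp; repeat case: ifP; lia.
Qed.

Lemma Sn_realizable_fix_or_collapse F :
  F n.-1 = n.-1 -> (forall q, q < n -> F q < n) ->
  F 0 = 0 \/ (forall q, q < n -> F q = F 0 \/ F q = n.-1) -> Sn_realizable F.
Proof.
move=> Flast F_lt shape; have [F0|F0_gt0] := posnP (F 0); first exact: Sn_realizable_fix_ends.
case: shape => [F0|collapse]; first by rewrite F0 in F0_gt0.
have e := @Sn_realizable_letter 4 isT.
have [F0last|F0_neq_last] := eqVneq (F 0) n.-1.
  apply: (Sn_realizable_ext (Sn_realizable_comp e (@Sn_realizable_letter 5 isT))) => q lt_qn /=.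
  by have := collapse q lt_qn; rewrite F0last /Sn_nat; repeat case: ifP; lia.
(* G sends to n-1 the states F sends there; then e sends every other state
   to 1, which the transposition (1, F 0) moves to F 0. *)
pose G q := if F q == n.-1 then n.-1 else q.
have GP : Sn_realizable G.
  apply: Sn_realizable_fix_ends; rewrite /G ?Flast ?eqxx ?(negbTE F0_neq_last) //.
  by move=> q lt_qn; case: ifP; lia.
have F0_mid : 0 < F 0 <= n - 2 by have := F_lt 0; move: F0_neq_last => /eqP; lia.
have sP := Sn_realizable_transp1 F0_mid.
apply: (Sn_realizable_ext (Sn_realizable_comp (Sn_realizable_comp GP e) sP)) => q lt_qn /=.
have [->|q_neq_last] := eqVneq q n.-1.
  by rewrite /G Flast eqxx /Sn_nat /transp; repeat case: ifP; lia.
have := collapse q lt_qn; move: q_neq_last => /eqP.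
by rewrite /G /Sn_nat /transp; repeat case: ifP; lia.
Qed.

Lemma Sn_realizable_nonempty F :
  Sn_realizable F -> exists2 w, w != [::] & forall q : 'I_n, val (dw (@Sn_delta n) q w) = F q.
Proof.
pose b : 'I_6 := Ordinal (isT : 1 < 6).
move=> [w Fw]; exists (w ++ [:: b; b]) => [|q]; first by case: w {Fw}.
rewrite dw_cat /= !val_Sn_delta /= -Fw; by case: (dw _ q w) => [[|[|[|m]]]].
Qed.

Lemma mem_S_n (t : {ffun 'I_n -> 'I_n}) F :
  Sn_realizable F -> (forall q : 'I_n, F q = t q) -> t \in S_n n.
Proof.
move=> /Sn_realizable_nonempty [w w_neq0 Fw] Ft; rewrite inE; apply/asboolP.
exists w; split; first exact/eqP.
by apply/ffunP => q; apply: val_inj; rewrite ffunE Fw Ft.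
Qed.

End SnRealizable.

Definition fix_or_collapse (T : finType) (q0 z : T) : {set {ffun T -> T}} :=
  [set t : {ffun T -> T} | (t z == z) && ((t q0 == q0) || [forall q, (t q == t q0) || (t q == z)])].

Section CardFixOrCollapse.

Variables (T : finType) (q0 z : T).
Hypothesis q0_neq_z : q0 != z.

Let mid := {q : T | q \notin [set q0; z]}.

Lemma card_mid : #|{: mid}| = #|T| - 2.
Proof.
rewrite card_sig -(@eq_card _ (~: [set q0; z])) => [|q]; last by rewrite inE.
by rewrite cardsCs setCK cards2 q0_neq_z.
Qed.

Lemma ffun_eq_on_mid (A : Type) (f g : {ffun T -> A}) :
  f q0 = g q0 -> f z = g z -> (forall m : mid, f (val m) = g (val m)) -> f = g.
Proof.
move=> fg0 fgz fgm; apply/ffunP => q.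
have [|q_mid] := boolP (q \in [set q0; z]); last exact: (fgm (Sub q q_mid)).
by rewrite !inE => /orP [] /eqP ->.
Qed.

Lemma fix_or_collapseE t : t \in fix_or_collapse q0 z -> t q0 != q0 ->
  forall q, t q = if t q == z then z else t q0.
Proof.
rewrite inE => /andP [_ /orP [->//|/forallP collapse]] _ q.
by case: (orP (collapse q)) => /eqP ->; rewrite ?eqxx //; case: eqP.
Qed.

Definition fix_or_collapse_code (t : {ffun T -> T}) :
    {ffun mid -> T} + option (mid * {ffun mid -> bool}) :=
  if t q0 == q0 then inl [ffun m => t (val m)]
  else inr (omap (fun m => (m, [ffun m' : mid => t (val m') == z])) (insub (t q0) : option mid)).

Lemma fix_or_collapse_code_inj : {in fix_or_collapse q0 z &, injective fix_or_collapse_code}.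
Proof.
move=> t1 t2 t1P t2P; have [t1z t2z] : t1 z = z /\ t2 z = z.
  by move: t1P t2P; rewrite !inE => /andP [/eqP -> _] /andP [/eqP -> _].
rewrite /fix_or_collapse_code.
have [t10|t10] := eqVneq (t1 q0) q0; have [t20|t20] := eqVneq (t2 q0) q0;
  try (move=> ?; discriminate).
  move=> [eq_t]; apply: ffun_eq_on_mid; rewrite ?t10 ?t20 ?t1z ?t2z // => m.
  by have /ffunP/(_ m) := eq_t; rewrite !ffunE.
have [E1 E2] := (fix_or_collapseE t1P t10, fix_or_collapseE t2P t20).
case: insubP => [m1 _ t1m|]; case: insubP => [m2 _ t2m|] //=; last first.
  rewrite !inE !negbK (negbTE t10) (negbTE t20) => /eqP t2z0 /eqP t1z0 _.
  by apply/ffunP => q; rewrite E1 E2 t1z0 t2z0; case: ifP; case: ifP.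
move=> [m12 /ffunP eq_z]; have eq_t0 : t1 q0 = t2 q0 by rewrite -t1m -t2m m12.
apply: ffun_eq_on_mid; rewrite ?t1z ?t2z // => m.
by rewrite E1 E2 eq_t0; have := eq_z m; rewrite !ffunE => ->.
Qed.

Lemma card_fix_or_collapse :
  #|fix_or_collapse q0 z| <= #|T| ^ (#|T| - 2) + (#|T| - 2) * 2 ^ (#|T| - 2) + 1.
Proof.
apply: (leq_trans (@leq_card_in _ _ _ _ fix_or_collapse_code_inj)).
by rewrite card_sum card_option card_prod !card_ffun card_bool card_mid addn1 addnS.
Qed.

End CardFixOrCollapse.

Section IdealDFA.

Variables (Sigma : finType) (n : nat) (delta : Sigma -> 'I_n -> 'I_n) (q0 z : 'I_n).
Hypotheses (delta_min : minimal_dfa delta) (delta_ideal : two_sided_ideal (dfa_lang delta)).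
Hypotheses (q0_init : val q0 = 0) (z_final : val z = n.-1).

Lemma Kq_cat q u v : Kq delta q (u ++ v) = Kq delta (dw delta q u) v.
Proof. by rewrite /Kq dw_cat. Qed.

Lemma Kq_trans_of w q v : Kq delta (trans_of delta w q) v = Kq delta q (w ++ v).
Proof. by rewrite Kq_cat ffunE. Qed.

Lemma dfa_langE v : dfa_lang delta v <-> Kq delta q0 v.
Proof.
split=> [[p [p0 Kp]]|]; last by exists q0.
by have -> : q0 = p by apply: val_inj; rewrite q0_init p0.
Qed.

Lemma Kq_init_infix u v w : Kq delta q0 v -> Kq delta q0 (u ++ v ++ w).
Proof. by move=> /dfa_langE Lv; apply/dfa_langE/delta_ideal.2; exists u, v, w. Qed.

Lemma reachable_from_init q : exists u, dw delta q0 u = q.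
Proof.
have [p [u [p0 <-]]] := delta_min.1 q; exists u.
by congr dw; apply: val_inj; rewrite q0_init p0.
Qed.

Lemma Kq_init_sub q v : Kq delta q0 v -> Kq delta q v.
Proof.
move=> K0; have [u <-] := reachable_from_init q.
by rewrite -Kq_cat; have := Kq_init_infix u [::] K0; rewrite cats0.
Qed.

Lemma Kq_final v : Kq delta z v.
Proof.
have [u uz] := reachable_from_init z.
have Ku : Kq delta q0 u by rewrite /Kq uz z_final.
by have := Kq_init_infix [::] v Ku; rewrite /= Kq_cat uz.
Qed.

Lemma eq_init_of_sub p : (forall v, Kq delta p v -> Kq delta q0 v) -> p = q0.
Proof. by move=> sub; apply: delta_min.2 => v; split=> [/sub|/Kq_init_sub]. Qed.

Lemma eq_final_of_full p : (forall v, Kq delta p v) -> p = z.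
Proof. by move=> full; apply: delta_min.2 => v; split=> _; [exact: Kq_final | exact: full]. Qed.

Lemma prec_of_sub p q :
  (forall v, Kq delta p v -> Kq delta q v) -> p != q -> prec delta p q.
Proof.
move=> sub /eqP pq; split=> //; apply: contrapT => no_witness; apply: pq.
apply: delta_min.2 => v; split=> [/sub //|Kqv]; apply: contrapT => nKpv.
by apply: no_witness; exists v.
Qed.

Hypothesis delta_chain3 : forall s : seq 'I_n, prec_chain delta s -> size s <= 3.

Lemma eq_of_sub_mid p q : p != q0 -> p != z -> q != q0 -> q != z ->
  (forall v, Kq delta p v -> Kq delta q v) -> p = q.
Proof.
move=> p_neq0 p_neqz q_neq0 q_neqz sub; apply/eqP/contraT => pq.
suff /delta_chain3 : prec_chain delta [:: q0; p; q; z] by [].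
split; first by apply: prec_of_sub; [exact: Kq_init_sub | rewrite eq_sym].
split; first exact: prec_of_sub.
by split=> //; apply: prec_of_sub => // v _; apply: Kq_final.
Qed.

Lemma trans_semigroup_sub : trans_semigroup delta \subset fix_or_collapse q0 z.
Proof.
apply/subsetP => _ /[1!inE] /asboolP [w [_ ->]]; set t := trans_of delta w.
have t_mono q v : Kq delta (t q0) v -> Kq delta (t q) v.
  by rewrite !Kq_trans_of; apply: Kq_init_sub.
rewrite inE; apply/andP; split.
  by apply/eqP/eq_final_of_full => v; rewrite Kq_trans_of; apply: Kq_final.
have [//|t0_neq0] := eqVneq (t q0) q0; apply/forallP => q.
have [tq_z|tq_neqz] := eqVneq (t q) z; first by rewrite tq_z orbT.
have [t0_z|t0_neqz] := eqVneq (t q0) z.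
  by case/eqP: tq_neqz; apply: eq_final_of_full => v; apply: t_mono; rewrite t0_z; apply: Kq_final.
have tq_neq0 : t q != q0.
  by apply: contraNneq t0_neq0 => tq0; apply/eqP/eq_init_of_sub => v /(t_mono q); rewrite tq0.
by rewrite (eq_of_sub_mid t0_neq0 t0_neqz tq_neq0 tq_neqz (t_mono q)) eqxx.
Qed.

End IdealDFA.

Lemma fix_or_collapse_sub_S_n n (q0 z : 'I_n) :
  4 <= n -> val q0 = 0 -> val z = n.-1 -> fix_or_collapse q0 z \subset S_n n.
Proof.
move=> n_ge4 q0_init z_final; apply/subsetP => t.
rewrite inE => /andP [/eqP tz shape].
pose F q := val (t (insubd q0 q)).
have FE (q : 'I_n) : F q = t q by rewrite /F valKd.
apply: (mem_S_n n_ge4 (F := F)) => //; apply: Sn_realizable_fix_or_collapse => //.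
- by rewrite -z_final FE tz.
- by move=> q _; apply: ltn_ord.
case/orP: shape => [/eqP t0|/forallP collapse]; [left|right].
  by rewrite -q0_init FE t0.
move=> q lt_qn; rewrite -[q]/(nat_of_ord (Ordinal lt_qn)) FE -q0_init FE -z_final.
by case/orP: (collapse (Ordinal lt_qn)) => /eqP ->; [left|right].
Qed.

Theorem lemma7 (n : nat) (Sigma : finType) (delta : Sigma -> 'I_n -> 'I_n) :
  4 <= n ->
  minimal_dfa delta ->
  two_sided_ideal (dfa_lang delta) ->
  (forall s : seq 'I_n, prec_chain delta s -> size s <= 3) ->
  #|trans_semigroup delta| <= n ^ (n - 2) + (n - 2) * 2 ^ (n - 2) + 1
  /\ trans_semigroup delta \subset S_n n.
Proof.
move=> n_ge4 delta_min delta_ideal delta_chain3.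
pose q0 : 'I_n := Ordinal (ltac:(lia) : 0 < n).
pose z : 'I_n := Ordinal (ltac:(lia) : n.-1 < n).
have q0_neq_z : q0 != z by rewrite -val_eqE /=; lia.
have sub := trans_semigroup_sub delta_min delta_ideal (erefl : val q0 = 0)
  (erefl : val z = n.-1) delta_chain3.
split; last exact: subset_trans sub (@fix_or_collapse_sub_S_n n q0 z n_ge4 erefl erefl).
apply: leq_trans (subset_leq_card sub) _.
by have := card_fix_or_collapse q0_neq_z; rewrite card_ord.
Qed.
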